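(* Let $A$ be a rational matrix. Then $A$ is totally equimodular if and only if every matrix obtained from $A$ by a finite (possibly empty) sequence of pivots and trims is essentially $0,\pm1$.
   Context: An $m\times n$ matrix is equimodular if it has full row rank $m$ and all its nonzero $m\times m$ minors have the same absolute value. A matrix is totally equimodular if every set of linearly independent rows of it forms an equimodular matrix. A pivot of a matrix $A$ is a position $p=(i,j)$ with $A_i^j\neq 0$. The $p$-pivot $A/p$ is obtained from $A$ by dividing row $i$ by $A_i^j$ and then adding suitable multiples of this new row to the other rows so that column $j$ becomes the $i$-th unit vector. The $p$-trim $A/\!\!/p$ is obtained from $A/p$ by deleting row $i$ and column $j$. A matrix is essentially $0,\pm1$ if, in each row, all nonzero entries have the same absolute value. *)

From HB Require Import structures.
From mathcomp Require Import all_boot all_order all_algebra.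
Set Implicit Arguments. Unset Strict Implicit. Unset Printing Implicit Defensive.
Import Order.TTheory GRing.Theory Num.Theory.
Local Open Scope ring_scope.

(* A k x k minor is given by an injective
   choice of k columns (reordering columns only changes the sign). *)
Definition equimodular (k n : nat) (B : 'M[rat]_(k, n)) : Prop :=
  row_free B /\
  forall f g : 'I_k -> 'I_n, injective f -> injective g ->
    \det (colsub f B) != 0 -> \det (colsub g B) != 0 ->
    `|\det (colsub f B)| = `|\det (colsub g B)|.

Definition totally_equimodular (m n : nat) (A : 'M[rat]_(m, n)) : Prop :=
  forall (k : nat) (r : 'I_k -> 'I_m), injective r ->
    row_free (rowsub r A) -> equimodular (rowsub r A).

Definition pivot (m n : nat) (A : 'M[rat]_(m, n)) (i : 'I_m) (j : 'I_n)
  : 'M[rat]_(m, n) :=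
  \matrix_(r, c) if r == i then A i c / A i j
                 else A r c - A r j * (A i c / A i j).

Definition trim (m n : nat) (A : 'M[rat]_(m, n)) (i : 'I_m) (j : 'I_n)
  : 'M[rat]_(m.-1, n.-1) :=
  row' i (col' j (pivot A i j)).

Definition essentially01 (m n : nat) (A : 'M[rat]_(m, n)) : Prop :=
  forall (r : 'I_m) (c c' : 'I_n), A r c != 0 -> A r c' != 0 ->
    `|A r c| = `|A r c'|.

Inductive reach (m n : nat) (A : 'M[rat]_(m, n)) : forall p q : nat, 'M[rat]_(p, q) -> Prop :=
| reach_refl : reach A A
| reach_pivot (p q : nat) (B : 'M[rat]_(p, q)) (i : 'I_p) (j : 'I_q) :
    reach A B -> B i j != 0 -> reach A (pivot B i j)
| reach_trim (p q : nat) (B : 'M[rat]_(p, q)) (i : 'I_p) (j : 'I_q) :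
    reach A B -> B i j != 0 -> reach A (trim B i j).

From HB Require Import structures.
From mathcomp Require Import all_boot all_order all_algebra.
Set Implicit Arguments. Unset Strict Implicit. Unset Printing Implicit Defensive.
Import Order.TTheory GRing.Theory Num.Theory.
Local Open Scope ring_scope.

(* A pivot at (i, j) multiplies every row submatrix through row i on the left
   by an invertible matrix of determinant 1 / A i j, so its minors are scaled
   uniformly; a row submatrix avoiding row i is enlarged by row i, in which
   column j of the pivoted matrix becomes a unit vector, and its minors are
   minors of the enlarged matrix.  Hence pivots and trims preserve total
   equimodularity, and single rows show that a totally equimodular matrix is
   essentially 0,+-1.
   Conversely, two nonzero k x k minors sharing a column are compared by
   pivoting on a nonzero entry of that column and expanding along it: both
   become |a| times (k-1) x (k-1) minors of the pivoted matrix, which still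
   only reaches essentially 0,+-1 matrices, so induction on k applies.  Two
   arbitrary nonzero minors are linked through a third one by a Steinitz
   exchange, which trades one column of the first for a column of the second
   while keeping the minor nonzero. *)

Lemma sum_delta (R : pzSemiRingType) k (s : 'I_k) (F : 'I_k -> R) : \sum_t (t == s)%:R * F t = F s.
Proof.
rewrite (bigD1 s) //= big1 ?addr0 ?eqxx ?mul1r // => t /negbTE ->.
by rewrite mul0r.
Qed.

Lemma det_neq0_col (R : comPzRingType) k (M : 'M[R]_k) t :
  \det M != 0 -> exists u, M u t != 0.
Proof.
move=> dM; apply/existsP; apply: contraNT dM; rewrite negb_exists => /forallP M0.
rewrite (expand_det_col M t) big1 // => u _.
by move/negPn: (M0 u) => /eqP->; rewrite mul0r.
Qed.

Lemma det_delta_col (R : comPzRingType) k (M : 'M[R]_k) s t :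
  (forall u, M u t = (u == s)%:R) -> \det M = cofactor M s t.
Proof.
move=> Mt; rewrite (expand_det_col M t) (bigD1 s) //= big1 ?addr0.
  by rewrite Mt eqxx mul1r.
by move=> u /negbTE us; rewrite Mt us mul0r.
Qed.

Section RankMinors.
Variable F : fieldType.

Lemma row_free_det_colsubP k n (B : 'M[F]_(k, n)) :
  reflect (exists f : 'I_k -> 'I_n, \det (colsub f B) != 0) (row_free B).
Proof.
apply: (iffP idP) => [Bfree | [f dBf]].
  have BTfull : row_full B^T by rewrite /row_full mxrank_tr.
  exists (fullrankfun BTfull).
  by rewrite -det_tr trmx_mxsub -unitfE -unitmxE fullrowsub_unit.
have : \rank (colsub f B) = k by apply: mxrank_unit; rewrite unitmxE unitfE.
move=> rkf; rewrite /row_free eqn_leq rank_leq_row -[X in (X <= _)%N]rkf.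
by rewrite -[B in colsub _ B]mulmx1 -mulmx_colsub mxrankM_maxl.
Qed.

Lemma row_free_colsub k n n' (B : 'M[F]_(k, n)) (g : 'I_n' -> 'I_n) :
  row_free (colsub g B) -> row_free B.
Proof.
case/row_free_det_colsubP => f; rewrite -colsub_comp => dBgf.
by apply/row_free_det_colsubP; exists (g \o f).
Qed.

Lemma det_colsub_exchange k n (X : 'M[F]_(k, n)) (f g : 'I_k -> 'I_n) t0 :
  \det (colsub f X) != 0 -> \det (colsub g X) != 0 ->
  exists t, \det (colsub [eta f with t0 |-> g t] X) != 0.
Proof.
move=> df dg; apply/existsP; apply: contraNT df.
(* Otherwise the cofactors along column t0 of colsub f X form a row vector
   annihilating the invertible matrix colsub g X. *)
rewrite negb_exists => /forallP fg0.
pose w : 'rV[F]_k := \row_u cofactor (colsub f X) u t0.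
have wg : w *m colsub g X = 0.
  apply/rowP => t; rewrite !mxE -[RHS](eqP (negPn (fg0 t))) (expand_det_col _ t0).
  apply: eq_bigr => u _; rewrite !mxE /= eqxx mulrC /cofactor; congr (_ * (_ * \det _)).
  by apply/matrixP => a b; rewrite !mxE /= lift_eqF.
move/eqP: wg; rewrite mulmx_free_eq0 ?row_free_unit ?unitmxE ?unitfE // => /eqP w0.
rewrite (expand_det_col _ t0) big1 // => u _.
by have := congr1 (fun v : 'rV_k => v 0 u) w0; rewrite !mxE => ->; rewrite mulr0.
Qed.

End RankMinors.

Definition pivotmx k n (B : 'M[rat]_(k, n)) (s : 'I_k) (j : 'I_n) : 'M[rat]_k :=
  \matrix_(u, t) if u == s then (t == s)%:R / B s j
                 else (u == t)%:R - (t == s)%:R * (B u j / B s j).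

Section Pivot.
Variables (k n : nat) (B : 'M[rat]_(k, n)) (s : 'I_k) (j : 'I_n).

Lemma pivotE : pivot B s j = pivotmx B s j *m B.
Proof.
apply/matrixP => u c; rewrite !mxE; under eq_bigr do rewrite mxE.
case: eqP => [_|/eqP us].
  by under eq_bigr do rewrite mulrAC; rewrite -big_distrl /= sum_delta.
under eq_bigr do rewrite mulrBl eq_sym; rewrite sumrB sum_delta.
by under eq_bigr do rewrite -mulrA; rewrite sum_delta mulrA mulrAC.
Qed.

Lemma det_pivotmx : \det (pivotmx B s j) = (B s j)^-1.
Proof.
rewrite (expand_det_row _ s) (bigD1 s) //= big1 ?addr0; last first.
  by move=> t /negbTE ts; rewrite mxE eqxx ts !mul0r.
rewrite mxE !eqxx mul1r /cofactor -signr_odd addnn odd_double mul1r.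
suff -> : row' s (col' s (pivotmx B s j)) = 1%:M by rewrite det1 mulr1.
apply/matrixP => u t; rewrite !mxE !lift_eqF (inj_eq (@lift_inj _ s)).
by rewrite mul0r subr0.
Qed.

Lemma det_colsub_pivot (f : 'I_k -> 'I_n) :
  \det (colsub f (pivot B s j)) = (B s j)^-1 * \det (colsub f B).
Proof. by rewrite pivotE -mulmx_colsub det_mulmx det_pivotmx. Qed.

Hypothesis Bsj : B s j != 0.

Lemma pivot_col u : pivot B s j u j = (u == s)%:R.
Proof. by rewrite mxE; case: eqP => _; rewrite divff // mulr1 subrr. Qed.

Lemma row_free_pivot : row_free (pivot B s j) = row_free B.
Proof.
have Efull : row_full (pivotmx B s j).
  by rewrite row_full_unit unitmxE det_pivotmx unitfE invr_eq0.
by rewrite pivotE /row_free (eqmxMfull _ Efull).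
Qed.

Lemma equimodular_pivot : equimodular B -> equimodular (pivot B s j).
Proof.
case=> Bfree Bminors; split; first by rewrite row_free_pivot.
move=> f g f_inj g_inj; rewrite !det_colsub_pivot !mulf_eq0 invr_eq0 (negbTE Bsj) /=.
by move=> df dg; rewrite !normrM (Bminors f g).
Qed.

End Pivot.

Lemma rowsub_pivot m n k (A : 'M[rat]_(m, n)) (r : 'I_k -> 'I_m) s j :
  injective r -> rowsub r (pivot A (r s) j) = pivot (rowsub r A) s j.
Proof. by move=> r_inj; apply/matrixP => u c; rewrite !mxE (inj_eq r_inj). Qed.

Definition ord_cons k (T : Type) (x : T) (h : 'I_k -> T) : 'I_k.+1 -> T :=
  fun t => oapp h x (unlift ord0 t).

Lemma ord_cons0 k T (x : T) (h : 'I_k -> T) : ord_cons x h ord0 = x.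
Proof. by rewrite /ord_cons unlift_none. Qed.

Lemma ord_cons_lift k T (x : T) (h : 'I_k -> T) s : ord_cons x h (lift ord0 s) = h s.
Proof. by rewrite /ord_cons liftK. Qed.

Lemma ord_cons_inj k (T : eqType) (x : T) (h : 'I_k -> T) :
  injective h -> (forall s, h s != x) -> injective (ord_cons x h).
Proof.
move=> h_inj hx a b.
case: (unliftP ord0 a) => [a'|] ->; case: (unliftP ord0 b) => [b'|] ->;
  rewrite ?ord_cons0 ?ord_cons_lift //.
- by move/h_inj->.
- by move=> ha; have := hx a'; rewrite ha eqxx.
- by move=> hb; have := hx b'; rewrite -hb eqxx.
Qed.

Lemma row'_rowsub_cons (R : Type) m n k (M : 'M[R]_(m, n)) (x : 'I_m) (h : 'I_k -> 'I_m) :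
  row' ord0 (rowsub (ord_cons x h) M) = rowsub h M.
Proof. by apply/matrixP => a b; rewrite !mxE ord_cons_lift. Qed.

Section UnitColumn.
Variables (k n : nat) (C : 'M[rat]_(k.+1, n)) (j : 'I_n).
Hypothesis Cj : forall u, C u j = (u == ord0)%:R.

Lemma det_colsub_cons_unit_col (f : 'I_k -> 'I_n) :
  \det (colsub (ord_cons j f) C) = \det (colsub f (row' ord0 C)).
Proof.
rewrite (@det_delta_col _ _ _ ord0 ord0) => [|u]; last by rewrite mxE ord_cons0 Cj.
rewrite /cofactor expr0 mul1r; congr (\det _).
by apply/matrixP => a b; rewrite !mxE ord_cons_lift.
Qed.

Lemma row_free_unit_col : row_free (row' ord0 C) -> row_free C.
Proof.
case/row_free_det_colsubP => f df; apply/row_free_det_colsubP.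
by exists (ord_cons j f); rewrite det_colsub_cons_unit_col.
Qed.

Lemma equimodular_unit_col :
  equimodular C -> row_free (row' ord0 C) -> equimodular (row' ord0 C).
Proof.
case=> _ Cminors Dfree; split=> // f g f_inj g_inj.
have cons_inj h : injective h -> \det (colsub h (row' ord0 C)) != 0 ->
    injective (ord_cons j h).
  move=> h_inj dh; apply: ord_cons_inj => // s; apply/eqP => hs.
  have [u] := det_neq0_col s dh.
  by rewrite !mxE hs Cj lift_eqF eqxx.
move=> df dg; rewrite -!det_colsub_cons_unit_col.
by apply: Cminors; rewrite ?det_colsub_cons_unit_col //; apply: cons_inj.
Qed.

End UnitColumn.

Lemma totally_equimodular_rowsub m n k (A : 'M[rat]_(m, n)) (h : 'I_k -> 'I_m) :
  injective h -> totally_equimodular A -> totally_equimodular (rowsub h A).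
Proof.
move=> h_inj TA k' r r_inj; rewrite -rowsub_comp.
exact: TA (inj_comp h_inj r_inj).
Qed.

Lemma totally_equimodular_colsub m n k (A : 'M[rat]_(m, n)) (g : 'I_k -> 'I_n) :
  injective g -> totally_equimodular A -> totally_equimodular (colsub g A).
Proof.
move=> g_inj TA k' r r_inj; rewrite -mxsubrc mxsubcr => gBfree.
have [_ Bminors] := TA k' r r_inj (row_free_colsub gBfree).
split=> // f f' f_inj f'_inj.
by rewrite -!colsub_comp; apply: Bminors; apply: inj_comp.
Qed.

Lemma totally_equimodular_essentially01 m n (A : 'M[rat]_(m, n)) :
  totally_equimodular A -> essentially01 A.
Proof.
move=> TA i c c' Aic Aic'.
have inj1 T (h : 'I_1 -> T) : injective h by move=> a b _; rewrite !ord1.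
pose row_i (_ : 'I_1) := i.
have Afree : row_free (rowsub row_i A).
  by apply/row_free_det_colsubP; exists (fun=> c); rewrite det_mx11 !mxE.
have [_ /(_ (fun=> c) (fun=> c') (inj1 _ _) (inj1 _ _))] := TA 1 _ (inj1 _ row_i) Afree.
by rewrite !det_mx11 !mxE; apply.
Qed.

Lemma totally_equimodular_pivot m n (A : 'M[rat]_(m, n)) i j :
  A i j != 0 -> totally_equimodular A -> totally_equimodular (pivot A i j).
Proof.
move=> Aij TA.
have through_i k (r : 'I_k -> 'I_m) s : injective r -> r s = i ->
    row_free (rowsub r (pivot A i j)) -> equimodular (rowsub r (pivot A i j)).
  move=> r_inj rs; rewrite -rs in Aij *.
  have Bsj : rowsub r A s j != 0 by rewrite mxE.
  rewrite rowsub_pivot // row_free_pivot // => Bfree.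
  exact/equimodular_pivot/TA.
move=> k r r_inj; case: (boolP [exists s, r s == i]) => [/existsP[s /eqP]|].
  exact: through_i.
rewrite negb_exists => /forallP r_i.
have r'_inj : injective (ord_cons i r) := ord_cons_inj r_inj r_i.
have Cj u : rowsub (ord_cons i r) (pivot A i j) u j = (u == ord0)%:R.
  by rewrite mxE pivot_col // -[X in _ == X](ord_cons0 i r) (inj_eq r'_inj).
rewrite -(row'_rowsub_cons _ i) => Dfree.
apply: (equimodular_unit_col Cj _ Dfree); apply: through_i r'_inj (ord_cons0 i r) _.
exact: row_free_unit_col Cj Dfree.
Qed.

Lemma totally_equimodular_reach m n (A : 'M[rat]_(m, n)) p q (B : 'M[rat]_(p, q)) :
  totally_equimodular A -> reach A B -> totally_equimodular B.
Proof.
move=> TA; elim=> // [p' q' C i j _ TC Cij | p' q' C i j _ TC Cij].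
  exact: totally_equimodular_pivot.
rewrite /trim row'Esub col'Esub.
apply: totally_equimodular_rowsub (@lift_inj _ i) _.
apply: totally_equimodular_colsub (@lift_inj _ j) _.
exact: totally_equimodular_pivot.
Qed.

Lemma reach_trans m n p q p' q' (A : 'M[rat]_(m, n)) (B : 'M[rat]_(p, q))
  (C : 'M[rat]_(p', q')) : reach A B -> reach B C -> reach A C.
Proof.
move=> AB; elim=> // [p1 q1 D i j _ AD Dij | p1 q1 D i j _ AD Dij].
  exact: reach_pivot.
exact: reach_trim.
Qed.

Definition reach01 m n (A : 'M[rat]_(m, n)) : Prop :=
  forall p q (B : 'M[rat]_(p, q)), reach A B -> essentially01 B.

Lemma reach01_pivot m n (A : 'M[rat]_(m, n)) i j :
  reach01 A -> A i j != 0 -> reach01 (pivot A i j).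
Proof.
move=> A01 Aij p q B /(reach_trans (reach_pivot (reach_refl A) Aij)).
exact: A01.
Qed.

Definition equiminors k n (B : 'M[rat]_(k, n)) : Prop :=
  forall f g : 'I_k -> 'I_n, \det (colsub f B) != 0 -> \det (colsub g B) != 0 ->
    `|\det (colsub f B)| = `|\det (colsub g B)|.

Definition reach01_equiminors k : Prop :=
  forall m n (A : 'M[rat]_(m, n)) (r : 'I_k -> 'I_m),
    reach01 A -> injective r -> equiminors (rowsub r A).

Lemma reach01_equiminors1 : reach01_equiminors 1.
Proof.
move=> m n A r A01 _ f g; rewrite !det_mx11 !mxE.
exact: (A01 _ _ A (reach_refl A)).
Qed.

Lemma det_colsub_pivot_split k n (B : 'M[rat]_(k.+1, n)) s t (h : 'I_k.+1 -> 'I_n) :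
  B s (h t) != 0 ->
  `|\det (colsub h B)| =
    `|B s (h t)| * `|\det (colsub (h \o lift t) (row' s (pivot B s (h t))))|.
Proof.
move=> Bs; have := det_colsub_pivot B s (h t) h.
rewrite (@det_delta_col _ _ _ s t) => [E|u]; last by rewrite mxE pivot_col.
rewrite -[\det (colsub h B)](mulVKf Bs) -E /cofactor !normrM normrX normrN1.
rewrite expr1n mul1r; congr (_ * `|\det _|).
by apply/matrixP => a b; rewrite !mxE.
Qed.

Lemma equiminors_shared_column k m n (A : 'M[rat]_(m, n)) (r : 'I_k.+1 -> 'I_m)
  (f g : 'I_k.+1 -> 'I_n) t1 t2 :
  reach01_equiminors k -> reach01 A -> injective r -> f t1 = g t2 ->
  \det (colsub f (rowsub r A)) != 0 -> \det (colsub g (rowsub r A)) != 0 ->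
  `|\det (colsub f (rowsub r A))| = `|\det (colsub g (rowsub r A))|.
Proof.
move=> IHk A01 r_inj fg df dg.
have [s] := det_neq0_col t1 df; rewrite mxE => Bs.
have Bs' : rowsub r A s (g t2) != 0 by rewrite -fg.
move: df dg; rewrite -normr_eq0 (det_colsub_pivot_split Bs) => df.
rewrite -normr_eq0 (det_colsub_pivot_split Bs') => dg.
move: df dg; rewrite -fg -rowsub_pivot // row'Esub -rowsub_comp.
rewrite !mulf_eq0 !normr_eq0 !negb_or => /andP[_ df'] /andP[_ dg'].
have Ars : A (r s) (f t1) != 0 by rewrite mxE in Bs.
congr (_ * _); apply: (IHk _ _ _ _ (reach01_pivot A01 Ars)) df' dg'.
exact: inj_comp r_inj (@lift_inj _ s).
Qed.

Lemma reach01_equiminorsSS k : reach01_equiminors k.+1 -> reach01_equiminors k.+2.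
Proof.
move=> IHk m n A r A01 r_inj f g df dg.
have [t dh] := det_colsub_exchange ord0 df dg.
have shared := equiminors_shared_column IHk A01 r_inj.
rewrite (shared _ _ (lift ord0 ord0) (lift ord0 ord0) _ df dh) //.
by apply: (shared _ _ ord0 t) => //=; rewrite eqxx.
Qed.

Lemma reach01_rowsub_equiminors m n k (A : 'M[rat]_(m, n)) (r : 'I_k -> 'I_m) :
  reach01 A -> injective r -> equiminors (rowsub r A).
Proof.
have [equiminors_k _] : reach01_equiminors k /\ reach01_equiminors k.+1.
  elim: k {r} => [|k [_ IHk]]; last by split; last exact: reach01_equiminorsSS.
  split; last exact: reach01_equiminors1.
  by move=> m' n' B r _ _ f g; rewrite !det_mx00.
exact: equiminors_k.
Qed.

Theorem mainTheorem1 (m n : nat) (A : 'M[rat]_(m, n)) :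
  totally_equimodular A <->
  (forall (p q : nat) (B : 'M[rat]_(p, q)), reach A B -> essentially01 B).
Proof.
split=> [TA p q B AB | A01 k r r_inj rfree].
  exact/totally_equimodular_essentially01/(totally_equimodular_reach TA AB).
by split=> // f g _ _; apply: reach01_rowsub_equiminors.
Qed.
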